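(* The tree patterns $(21435,\text{-}1\text{-}\text{-})$ and $(13254,1\text{-}1\text{-})$ are Wilf-equivalent; that is, for all choices of values in $\{0,1\}$ at the positions marked ''-'', and all $n\ge0$, $|\mathcal{T}_n(21435,x1yz)|=|\mathcal{T}_n(13254,1u1v)|$.
   Context: $\mathcal{T}_n$ is the set of binary trees on $n$ vertices labeled $1,\dots,n$ by the search tree property. $c_L,c_R,p$: left child, right child, parent. A tree pattern is $(P,e)$, $P\in\mathcal{T}_k$, $e\colon[k]\setminus\{\text{root}\}\to\{0,1\}$ ($e(i)=1$: edge to the parent contiguous; $0$: non-contiguous). $T\in\mathcal{T}_n$ contains $(P,e)$ if there is an injection $f\colon[k]\to[n]$ such that for every non-root $i$ of $P$: if $e(i)=1$, $f(i)$ is the left (resp. right) child of $f(p(i))$ when $i$ is the left (resp. right) child of $p(i)$; if $e(i)=0$, $f(i)$ lies in the left (resp. right) subtree of $f(p(i))$. $\mathcal{T}_n(P,e)$ is the set of avoiders. Compact notation: $(\tau_1\cdots\tau_k,\,x_2\cdots x_k)$ denotes the pattern whose preorder vertex sequence (root, then left subtree recursively, then right subtree recursively) is $\tau_1,\dots,\tau_k$ and with $e(\tau_j)=x_j$. A hyphen ''-'' in the second component is a placeholder whose value (0 or 1) does not affect the set of avoiding trees. *)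

From mathcomp Require Import all_boot.
Set Implicit Arguments.
Unset Strict Implicit.
Unset Printing Implicit Defensive.

(* Unlabeled binary trees.  A tree with n nodes carries a unique labeling by
   1..n satisfying the search tree property (in-order labeling), so
   T_n is in bijection with the binary trees of size n. *)
Inductive btree := Leaf | Node of btree & btree.

Fixpoint bsize (t : btree) : nat :=
  match t with Leaf => 0 | Node l r => (bsize l + bsize r).+1 end.

(* Vertices are addressed by their path from the root:
   false = go to the left child, true = go to the right child.
   The children of vertex p are rcons p false (left) and rcons p true (right). *)
Fixpoint is_vertex (t : btree) (p : seq bool) : bool :=
  match t, p with
  | Leaf, _ => false
  | Node _ _, [::] => true
  | Node l r, b :: p' => is_vertex (if b then r else l) p'
  end.

(* A tree pattern (P,e): e assigns to each non-root vertex the contiguity of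
   the edge to its parent (true = 1 contiguous, false = 0 non-contiguous). *)
Definition contains (T P : btree) (e : seq bool -> bool) : Prop :=
  exists f : seq bool -> seq bool,
    (forall v, is_vertex P v -> is_vertex T (f v)) /\
    (forall v w, is_vertex P v -> is_vertex P w -> f v = f w -> v = w) /\
    (forall p b, is_vertex P (rcons p b) ->
       if e (rcons p b)
       then f (rcons p b) = rcons (f p) b
       else prefix (rcons (f p) b) (f (rcons p b)) ).

Definition avoiders (n : nat) (P : btree) (e : seq bool -> bool) :=
  { T : btree | bsize T = n /\ ~ contains T P e }.

(* Pattern (21435, x 1 y z): root 2, left child 1, right child 4,
   4 has left child 3 and right child 5.  In-order labels of paths:
   [::false]=1, [::]=2, [::true;false]=3, [::true]=4, [::true;true]=5. *)
Definition P21435 : btree :=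
  Node (Node Leaf Leaf) (Node (Node Leaf Leaf) (Node Leaf Leaf)).
Definition e21435 (x y z : bool) (v : seq bool) : bool :=
  match v with
  | [:: false] => x
  | [:: true] => true
  | [:: true; false] => y
  | [:: true; true] => z
  | _ => true                (* root / non-vertices: irrelevant *)
  end.

(* Pattern (13254, 1 u 1 v): root 1 with no left child, right child 3,
   3 has left child 2 and right child 5, 5 has left child 4.  Labels:
   [::]=1, [::true;false]=2, [::true]=3, [::true;true;false]=4, [::true;true]=5. *)
Definition P13254 : btree :=
  Node Leaf (Node (Node Leaf Leaf) (Node (Node Leaf Leaf) Leaf)).
Definition e13254 (u v : bool) (w : seq bool) : bool :=
  match w with
  | [:: true] => true
  | [:: true; false] => u
  | [:: true; true] => true
  | [:: true; true; false] => v
  | _ => true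
  end.

From mathcomp Require Import all_boot zify.
From HB Require Import structures.
From Stdlib Require Import ProofIrrelevance.

(* A tree is the sequence l_1, ..., l_k of left subtrees hanging off its right
   spine.  In both patterns only edges into leaves may be non-contiguous, so an
   occurrence can always be pulled back to a contiguous one.  At the spine,
   21435 occurs iff two consecutive l_i, l_(i+1) with i + 1 < k are nonempty,
   and 13254 occurs iff two consecutive l_i, l_(i+1) with i > 1 are nonempty.
   Reversing the spine, and recursively every left subtree, is a size-preserving
   involution that exchanges these two conditions at every level. *)

Lemma btree_comparable : comparable btree.
Proof. by rewrite /comparable /decidable; decide equality. Qed.
HB.instance Definition _ := comparableMixin btree_comparable.

Lemma is_vertex_prefix t p q : prefix p q -> is_vertex t q -> is_vertex t p.
Proof.
elim: t p q => [|l IHl r IHr] [|a p] [|b q] //= /andP[/eqP-> pq].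
by case: b; [apply: IHr | apply: IHl].
Qed.
Arguments is_vertex_prefix {t p q}.

Fixpoint fits (P T : btree) : bool :=
  match P, T with
  | Leaf, _ => true
  | Node _ _, Leaf => false
  | Node pl pr, Node tl tr => fits pl tl && fits pr tr
  end.

Fixpoint occurs (P T : btree) : bool :=
  fits P T || if T is Node l r then occurs P l || occurs P r else false.

Lemma fitsP P T : reflect (forall v, is_vertex P v -> is_vertex T v) (fits P T).
Proof.
elim: P T => [|pl IHl pr IHr] [|tl tr] /=; try by constructor.
  by constructor => /(_ [::] erefl).
apply: (iffP andP) => [[/IHl fl /IHr fr] [|[] v] //= | PT]; first exact: fr.
  exact: fl.
by split; [apply/IHl => v; exact: PT (false :: v) |
           apply/IHr => v; exact: PT (true :: v)].
Qed.

Lemma occursP P T :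
  reflect (exists p, forall v, is_vertex P v -> is_vertex T (p ++ v)) (occurs P T).
Proof.
elim: T => [|l IHl r IHr] /=; apply: (iffP idP).
- by rewrite orbF => /fitsP PT; exists [::].
- by case=> p PT; rewrite orbF; apply/fitsP => v /PT; case: p.
- case/orP => [/fitsP PT|/orP[/IHl [p PT]|/IHr [p PT]]].
  + by exists [::].
  + by exists (false :: p).
  + by exists (true :: p).
- case=> [[|[] p] PT].
  + by apply/orP; left; apply/fitsP.
  + by apply/orP; right; apply/orP; right; apply/IHr; exists p.
  + by apply/orP; right; apply/orP; left; apply/IHl; exists p.
Qed.

Definition internal_contiguous (P : btree) (e : seq bool -> bool) : Prop :=
  forall w b, w != [::] -> is_vertex P (rcons w b) -> e w.

Lemma contains_occurs {P : btree} {e : seq bool -> bool} :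
  internal_contiguous P e -> forall T, contains T P e <-> occurs P T.
Proof.
move=> e_internal T; split; last first.
  case/occursP=> p PT; exists (cat p); split=> //; split.
    by move=> v w _ _; elim: p {PT} => //= a p IHp [] /IHp.
  by move=> q b _; rewrite -rcons_cat; case: (e _) => //; apply: prefix_refl.
case=> f [fV [_ fE]]; apply/occursP; exists (f [::]).
have f_internal w b : is_vertex P (rcons w b) -> f w = f [::] ++ w.
  elim/last_ind: w b => [|w a IHw] b Pwab; first by rewrite cats0.
  have Pwa : is_vertex P (rcons w a) := is_vertex_prefix (prefix_rcons _ _) Pwab.
  have e_wa : e (rcons w a) by apply: e_internal Pwab; case: (w).
  by have := fE w a Pwa; rewrite e_wa (IHw a Pwa) rcons_cat.
case/lastP => [|w b] Pwb; first by rewrite cats0; apply: fV.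
apply: is_vertex_prefix (fV _ Pwb).
rewrite -rcons_cat -(f_internal w b Pwb).
by have := fE w b Pwb; case: (e _) => [->|//]; apply: prefix_refl.
Qed.

Lemma internal_contiguous21435 x y z : internal_contiguous P21435 (e21435 x y z).
Proof. by move=> w []; case: w => [|[] [|[] [|[] ?]]]. Qed.

Lemma internal_contiguous13254 u v : internal_contiguous P13254 (e13254 u v).
Proof. by move=> w []; case: w => [|[] [|[] [|[] [|[] ?]]]]. Qed.

Definition isnode (t : btree) : bool := if t is Node _ _ then true else false.

Definition build (s : seq btree) : btree := foldr Node Leaf s.

Fixpoint spine (t : btree) : seq btree :=
  if t is Node l r then l :: spine r else [::].

Lemma buildK : cancel build spine.
Proof. by elim=> //= a s ->. Qed.

Lemma spineK : cancel spine build.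
Proof. by elim=> //= l _ r ->. Qed.

Lemma isnode_build s : isnode (build s) = (s != [::]).
Proof. by case: s. Qed.

Lemma spine_ind (Q : btree -> Prop) :
  (forall t, (forall x, x \in spine t -> Q x) -> Q t) -> forall t, Q t.
Proof.
move=> IH t; apply: (IH); elim: t => //= l IHl r IHr x.
by rewrite inE => /orP[/eqP-> | /IHr]; first apply: IH.
Qed.

Fixpoint spine_rev_acc (t acc : btree) : btree :=
  if t is Node l r then spine_rev_acc r (Node (spine_rev_acc l Leaf) acc) else acc.

Definition spine_rev (t : btree) : btree := spine_rev_acc t Leaf.

Lemma spine_rev_accE t acc :
  spine_rev_acc t acc = foldr Node acc (rev (map spine_rev (spine t))).
Proof. by elim: t acc => //= l _ r IHr acc; rewrite IHr rev_cons -cats1 foldr_cat. Qed.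

Lemma spine_revE t : spine_rev t = build (rev (map spine_rev (spine t))).
Proof. exact: spine_rev_accE. Qed.

Lemma bsize_spine_rev t : bsize (spine_rev t) = bsize t.
Proof.
suff acc_size acc : bsize (spine_rev_acc t acc) = bsize t + bsize acc.
  by rewrite /spine_rev acc_size addn0.
elim: t acc => //= l IHl r IHr acc; rewrite IHr /= IHl addn0; lia.
Qed.

Lemma isnode_spine_rev t : isnode (spine_rev t) = isnode t.
Proof.
by rewrite spine_revE -[in RHS](spineK t) !isnode_build -!size_eq0 size_rev size_map.
Qed.

Lemma spine_revK : involutive spine_rev.
Proof.
move=> t; elim/spine_ind: t => t IHt.
rewrite [spine_rev t]spine_revE spine_revE buildK map_rev revK -map_comp.
have -> : map (spine_rev \o spine_rev) (spine t) = map id (spine t).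
  by apply/eq_in_map => x /IHt.
by rewrite map_id spineK.
Qed.

Definition some_leaf (a b : btree) : bool := ~~ (isnode a && isnode b).

Lemma occurs_node P l r :
  occurs P (Node l r) = [|| fits P (Node l r), occurs P l | occurs P r].
Proof. by []. Qed.

Lemma fits21435_build a b s :
  fits P21435 (build [:: a, b & s]) = [&& isnode a, isnode b & s != [::]].
Proof. by case: a; case: b; case: s. Qed.

Lemma occurs21435_build s :
  occurs P21435 (build s) =
    has (occurs P21435) s || ~~ sorted some_leaf (take (size s).-1 s).
Proof.
elim: s => // a [|b s] IH.
  by rewrite /= !orbF; case: a.
rewrite (occurs_node _ a) fits21435_build -/(build (b :: s)) IH.
case: s IH => [|c s] IH.
  by rewrite !andbF !orbF.
rewrite /= andbT /some_leaf.
by case: (_ && _); case: (path _ _ _); rewrite /= ?orbT ?orbF ?orbA.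
Qed.

Lemma fits13254_build a b c s :
  fits P13254 (build [:: a, b, c & s]) = isnode b && isnode c.
Proof. by case: b; case: c. Qed.

Lemma occurs13254_build s :
  occurs P13254 (build s) =
    has (occurs P13254) s || ~~ sorted some_leaf (behead s).
Proof.
elim: s => // a [|b [|c s]] IH.
- by rewrite /= !orbF.
- by rewrite /= !orbF andbF.
rewrite (occurs_node _ a) fits13254_build -/(build [:: b, c & s]) IH /= /some_leaf.
by case: (_ && _); case: (path _ _ _); rewrite /= ?orbT ?orbF ?orbA.
Qed.

Lemma some_leafC : symmetric some_leaf.
Proof. by move=> a b; rewrite /some_leaf andbC. Qed.

Lemma some_leaf_spine_rev : {mono spine_rev : a b / some_leaf a b}.
Proof. by move=> a b; rewrite /some_leaf !isnode_spine_rev. Qed.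

Lemma occurs13254_spine_rev t : occurs P13254 (spine_rev t) = occurs P21435 t.
Proof.
elim/spine_ind: t => t IHt.
rewrite spine_revE occurs13254_build -[in RHS](spineK t) occurs21435_build.
congr (_ || ~~ _).
  by rewrite has_rev has_map; apply: eq_in_has => x /IHt.
case/lastP: (spine t) => // s x.
rewrite map_rcons rev_rcons /= size_rcons -cats1 take_size_cat // rev_sorted.
by rewrite (eq_sorted (fun a b => some_leafC b a)) (mono_sorted some_leaf_spine_rev).
Qed.

Lemma avoiders_bijective {n : nat} {P P' : btree} {e e' : seq bool -> bool}
    {g : btree -> btree} :
  involutive g -> (forall t, bsize (g t) = bsize t) ->
  (forall t, contains (g t) P' e' <-> contains t P e) ->
  exists f : avoiders n P e -> avoiders n P' e', bijective f.
Proof.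
move=> gK g_size g_swap.
have to_avoid t :
    bsize t = n /\ ~ contains t P e -> bsize (g t) = n /\ ~ contains (g t) P' e'.
  by case=> tn tP; rewrite g_size; split=> // /g_swap.
have from_avoid t :
    bsize t = n /\ ~ contains t P' e' -> bsize (g t) = n /\ ~ contains (g t) P e.
  by case=> tn tP; rewrite g_size; split=> // /g_swap; rewrite gK.
exists (fun t => exist _ (g (sval t)) (to_avoid _ (svalP t))).
exists (fun t => exist _ (g (sval t)) (from_avoid _ (svalP t)));
  by case=> t tP; apply: subset_eq_compat; rewrite /= gK.
Qed.

Theorem lemma22 (x y z u v : bool) (n : nat) :
  exists f : avoiders n P21435 (e21435 x y z) -> avoiders n P13254 (e13254 u v),
    bijective f.
Proof.
apply: (avoiders_bijective spine_revK bsize_spine_rev) => t.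
apply: iff_trans (contains_occurs (internal_contiguous13254 u v) _) _.
rewrite occurs13254_spine_rev.
exact: iff_sym (contains_occurs (internal_contiguous21435 x y z) _).
Qed.
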